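(* Consider the sub-$\ell^\infty$ structure on $\mathbb{R}^2$ defined by $X_1=\partial_x$, $X_2=x\partial_y$. The nonconstant extremal trajectories that have a singular arc (i.e. a $\varphi_j$-singular arc for some $j\in\{1,2\}$ for some extremal lift) are exactly the nonconstant admissible trajectories for which $u_1$ is a.e. constantly equal to $1$ or a.e. constantly equal to $-1$. Each of them consists of a single singular arc (the singularity holds on the whole domain of definition), and each of them is a time-minimizer.
   Context: Sub-$\ell^\infty$ structure defined by smooth vector fields $X_1,\dots,X_k$ on a manifold $M$: an admissible trajectory is an absolutely continuous curve $\gamma:[0,T]\to M$ together with a measurable control $u=(u_1,\dots,u_k):[0,T]\to\mathbb{R}^k$ with $|u_i(t)|\le1$ for all $i$ and a.e. $t$, such that $\dot\gamma(t)=\sum_i u_i(t)X_i(\gamma(t))$ for a.e. $t$. It is a time-minimizer (optimal) if no admissible trajectory joins $\gamma(0)$ to $\gamma(T)$ in time less than $T$. An extremal pair is a pair $(\lambda,\gamma)$ where $\gamma$ is admissible with control $u$ and $\lambda:[0,T]\to T^*M$ is absolutely continuous with $\lambda(t)\in T^*_{\gamma(t)}M\setminus\{0\}$, such that, with $\mathcal H(\lambda,p,u)=\sum_i u_i\langle\lambda,X_i(p)\rangle$, in canonical coordinates $\dot\lambda=-\partial_p\mathcal H(\lambda,\gamma,u)$, $\dot\gamma=\partial_\lambda\mathcal H(\lambda,\gamma,u)$ a.e., and there is a constant $\lambda_0\ge0$ with $\sum_iu_i(t)\langle\lambda(t),X_i(\gamma(t))\rangle=\sum_i|\langle\lambda(t),X_i(\gamma(t))\rangle|=\lambda_0$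 for a.e. $t$; $\gamma$ is then an extremal trajectory and $\lambda$ an extremal lift. The switching functions are $\varphi_j(t)=\langle\lambda(t),X_j(\gamma(t))\rangle$. The restriction of an extremal pair to an open interval $I$ is a $\varphi_j$-singular arc if $\varphi_j\equiv0$ on $I$. *)

From Stdlib Require Import Reals.
Open Scope R_scope.

Fixpoint sum_lt (n : nat) (g : nat -> R) : R :=
  match n with
  | O => 0
  | S m => sum_lt m g + g m
  end.

(** Lebesgue outer measure of A is <= r: for every eps > 0, A is covered by
    countably many open intervals (a k, b k) of total length <= r + eps. *)
Definition outer_le (A : R -> Prop) (r : R) : Prop :=
  forall eps, 0 < eps ->
    exists a b : nat -> R,
      (forall k, a k <= b k) /\
      (forall t, A t -> exists k, a k < t < b k) /\
      (forall n, sum_lt n (fun k => b k - a k) <= r + eps).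

Definition null_set (N : R -> Prop) : Prop := outer_le N 0.

Definition lmeasurable (E : R -> Prop) : Prop :=
  forall (A : R -> Prop) (r : R), outer_le A r ->
    exists r1 r2, r1 + r2 <= r /\
      outer_le (fun t => A t /\ E t) r1 /\
      outer_le (fun t => A t /\ ~ E t) r2.

Definition measurable_on (T : R) (u : R -> R) : Prop :=
  forall a, lmeasurable (fun t => 0 <= t <= T /\ a < u t).

Definition ae_on (T : R) (P : R -> Prop) : Prop :=
  exists N, null_set N /\ forall t, 0 < t < T -> ~ N t -> P t.

Definition abs_cont_on (T : R) (f : R -> R) : Prop :=
  forall eps, 0 < eps -> exists delta, 0 < delta /\
    forall (n : nat) (a b : nat -> R),
      (forall k, (k < n)%nat -> 0 <= a k /\ a k <= b k /\ b k <= T) ->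
      (forall k, (S k < n)%nat -> b k <= a (S k)) ->
      sum_lt n (fun k => b k - a k) < delta ->
      sum_lt n (fun k => Rabs (f (b k) - f (a k))) < eps.

(** A curve gamma = (x, y) on [0,T] (values outside [0,T] irrelevant),
    control u = (u1, u2).  Dynamics: gamma' = u1 X1(gamma) + u2 X2(gamma),
    i.e. x' = u1, y' = u2 * x. *)
Definition admissible (T : R) (x y u1 u2 : R -> R) : Prop :=
  0 <= T /\
  abs_cont_on T x /\ abs_cont_on T y /\
  measurable_on T u1 /\ measurable_on T u2 /\
  ae_on T (fun t => Rabs (u1 t) <= 1 /\ Rabs (u2 t) <= 1) /\
  ae_on T (fun t => derivable_pt_lim x t (u1 t) /\
                    derivable_pt_lim y t (u2 t * x t)).

(** Covector lambda = (p1, p2) in canonical coordinates.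
    H(lambda, (x,y), u) = u1 <lambda, X1> + u2 <lambda, X2>
                        = u1 p1 + u2 x p2.
    Switching functions: phi1 = <lambda,X1> = p1, phi2 = <lambda,X2> = x p2. *)
Inductive idx := J1 | J2.

Definition phi (j : idx) (x p1 p2 : R -> R) (t : R) : R :=
  match j with
  | J1 => p1 t
  | J2 => x t * p2 t
  end.

(** Extremal pair ((p1,p2), (x,y)) with control (u1,u2):
    lambda' = - d_p H = (- u2 p2, 0),  gamma' = d_lambda H (= admissibility),
    lambda(t) <> 0, and the maximality condition with constant lambda0 >= 0. *)
Definition extremal_pair (T : R) (x y u1 u2 p1 p2 : R -> R) : Prop :=
  admissible T x y u1 u2 /\
  abs_cont_on T p1 /\ abs_cont_on T p2 /\
  (forall t, 0 <= t <= T -> ~ (p1 t = 0 /\ p2 t = 0)) /\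
  ae_on T (fun t => derivable_pt_lim p1 t (- (u2 t * p2 t)) /\
                    derivable_pt_lim p2 t 0) /\
  exists lam0, 0 <= lam0 /\
    ae_on T (fun t =>
      u1 t * p1 t + u2 t * (x t * p2 t) = Rabs (p1 t) + Rabs (x t * p2 t) /\
      Rabs (p1 t) + Rabs (x t * p2 t) = lam0).

Definition singular_arc (T : R) (x p1 p2 : R -> R) (j : idx) (a b : R) : Prop :=
  0 <= a /\ a < b /\ b <= T /\
  forall t, a < t < b -> phi j x p1 p2 t = 0.

Definition has_singular_arc (T : R) (x y : R -> R) : Prop :=
  exists u1 u2 p1 p2, extremal_pair T x y u1 u2 p1 p2 /\
    exists j a b, singular_arc T x p1 p2 j a b.

Definition nonconstant (T : R) (x y : R -> R) : Prop :=
  exists t, 0 <= t <= T /\ (x t <> x 0 \/ y t <> y 0).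

Definition time_minimizer (T : R) (x y : R -> R) : Prop :=
  forall T' x' y' v1 v2, admissible T' x' y' v1 v2 ->
    x' 0 = x 0 -> y' 0 = y 0 -> x' T' = x T -> y' T' = y T ->
    T <= T'.

From Stdlib Require Import Reals Lra Lia Classical.
Open Scope R_scope.

(* Along any extremal, p2' = 0, so p2 is constant.  If p2 <> 0, a singular arc forces
   the Hamiltonian lam0 = |p1| + |x p2| to vanish (on a phi1-arc p1' = -u2 p2 = 0 gives
   u2 = 0; on a phi2-arc x = 0 gives u1 = x' = 0), hence x = 0 a.e., so x = 0 and y is
   constant: the trajectory is constant.  So p2 = 0, p1 is a nonzero constant and
   maximality u1 p1 = |p1| gives u1 = sgn p1 a.e.  Conversely, for u1 = sg = +-1 the lift
   (p1, p2) = (sg, 0) is extremal and phi2 = x p2 vanishes identically.  Such a curve has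
   |x(T) - x(0)| = T while every admissible curve satisfies |x(T') - x(0)| <= T', whence
   minimality.

   The analytic input is that an absolutely continuous function with derivative <= 0
   almost everywhere is nonincreasing, proved by real induction from the covering
   definition of null sets. *)

Lemma sum_lt_ext n g h :
  (forall i, (i < n)%nat -> g i = h i) -> sum_lt n g = sum_lt n h.
Proof.
  induction n as [|n IH]; intros Hgh; simpl; [reflexivity|].
  rewrite IH by (intros i Hi; apply Hgh; lia). rewrite Hgh by lia. reflexivity.
Qed.

Lemma sum_lt_le n g h :
  (forall i, (i < n)%nat -> g i <= h i) -> sum_lt n g <= sum_lt n h.
Proof.
  induction n as [|n IH]; intros Hgh; simpl; [lra|].
  apply Rplus_le_compat; [apply IH; intros i Hi|]; apply Hgh; lia.
Qed.

Lemma sum_lt_le_length n m h :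
  (forall i, 0 <= h i) -> (n <= m)%nat -> sum_lt n h <= sum_lt m h.
Proof.
  intros Hh Hnm. induction Hnm as [|m _ IH]; simpl; [lra|]. specialize (Hh m). lra.
Qed.

Lemma sum_lt_plus n g h : sum_lt n (fun i => g i + h i) = sum_lt n g + sum_lt n h.
Proof. induction n as [|n IH]; simpl; [ring|]. rewrite IH. ring. Qed.

Lemma sum_lt_scal n k g : sum_lt n (fun i => k * g i) = k * sum_lt n g.
Proof. induction n as [|n IH]; simpl; [ring|]. rewrite IH. ring. Qed.

Lemma sum_lt_nonneg n g : (forall i, (i < n)%nat -> 0 <= g i) -> 0 <= sum_lt n g.
Proof.
  induction n as [|n IH]; intros Hg; simpl; [lra|].
  assert (0 <= sum_lt n g) by (apply IH; intros i Hi; apply Hg; lia).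
  specialize (Hg n (Nat.lt_succ_diag_r n)). lra.
Qed.

Lemma sum_lt_add_at K k g e : (k < K)%nat ->
  sum_lt K (fun j => g j + (if Nat.eqb j k then e else 0)) = sum_lt K g + e.
Proof.
  induction K as [|K IH]; intros Hk; [lia|]. simpl.
  destruct (Nat.eqb_spec K k) as [->|Hne].
  - rewrite (sum_lt_ext k _ g); [ring|].
    intros i Hi. destruct (Nat.eqb_spec i k); [lia|ring].
  - rewrite IH by lia. ring.
Qed.

Definition interleave (f g : nat -> R) (k : nat) : R :=
  if Nat.even k then f (Nat.div2 k) else g (Nat.div2 k).

Lemma interleave_double f g k : interleave f g (2 * k) = f k.
Proof. unfold interleave. rewrite Nat.even_even, Nat.div2_double. reflexivity. Qed.

Lemma interleave_succ_double f g k : interleave f g (S (2 * k)) = g k.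
Proof.
  unfold interleave.
  rewrite Nat.even_succ, <- Nat.negb_even, Nat.even_even, Nat.div2_succ_double.
  reflexivity.
Qed.

Lemma interleave_minus f1 f2 g1 g2 k :
  interleave f1 f2 k - interleave g1 g2 k
  = interleave (fun i => f1 i - g1 i) (fun i => f2 i - g2 i) k.
Proof. unfold interleave. destruct (Nat.even k); reflexivity. Qed.

Lemma sum_lt_interleave f g m :
  sum_lt (2 * m) (interleave f g) = sum_lt m f + sum_lt m g.
Proof.
  induction m as [|m IH]; [simpl; ring|].
  replace (2 * S m)%nat with (S (S (2 * m))) by lia. cbn [sum_lt].
  rewrite IH, interleave_double, interleave_succ_double. ring.
Qed.

Lemma null_set_union A B : null_set A -> null_set B -> null_set (fun t => A t \/ B t).
Proof.
  intros HA HB eps Heps.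
  destruct (HA (eps / 2)) as (a1 & b1 & Hab1 & Hcov1 & Hsum1); [lra|].
  destruct (HB (eps / 2)) as (a2 & b2 & Hab2 & Hcov2 & Hsum2); [lra|].
  exists (interleave a1 a2), (interleave b1 b2). split; [|split].
  - intros k. unfold interleave. destruct (Nat.even k); auto.
  - intros t [Ht|Ht].
    + destruct (Hcov1 t Ht) as [k Hk]. exists (2 * k)%nat.
      rewrite !interleave_double. exact Hk.
    + destruct (Hcov2 t Ht) as [k Hk]. exists (S (2 * k)).
      rewrite !interleave_succ_double. exact Hk.
  - intros n.
    rewrite (sum_lt_ext n _ (interleave (fun k => b1 k - a1 k) (fun k => b2 k - a2 k)))
      by (intros; apply interleave_minus).
    apply Rle_trans with (sum_lt (2 * n)
      (interleave (fun k => b1 k - a1 k) (fun k => b2 k - a2 k))).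
    + apply sum_lt_le_length; [|lia]. intros k. unfold interleave.
      destruct (Nat.even k); [specialize (Hab1 (Nat.div2 k)) | specialize (Hab2 (Nat.div2 k))];
        lra.
    + rewrite sum_lt_interleave. specialize (Hsum1 n). specialize (Hsum2 n). lra.
Qed.

Lemma null_set_singleton s : null_set (fun t => t = s).
Proof.
  intros eps Heps.
  exists (fun k => match k with O => s - eps / 2 | _ => 0 end).
  exists (fun k => match k with O => s + eps / 2 | _ => 0 end).
  split; [intros [|k]; lra|]. split.
  - intros t ->. exists O. lra.
  - intros n. induction n as [|n IH]; [simpl; lra|]. destruct n; simpl in *; lra.
Qed.

Lemma ae_on_and T P Q : ae_on T P -> ae_on T Q -> ae_on T (fun t => P t /\ Q t).
Proof.
  intros (N1 & HN1 & H1) (N2 & HN2 & H2). exists (fun t => N1 t \/ N2 t).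
  split; [apply null_set_union; assumption|].
  intros t Ht HN. split; [apply H1 | apply H2]; tauto.
Qed.

Lemma ae_on_weaken T (P Q : R -> Prop) :
  ae_on T P -> (forall t, 0 < t < T -> P t -> Q t) -> ae_on T Q.
Proof. intros (N & HN & HP) HPQ. exists N. split; auto. Qed.

(** * Absolute continuity and derivatives *)

Lemma abs_cont_on_increment T f eps : abs_cont_on T f -> 0 < eps ->
  exists delta, 0 < delta /\
    forall s t, 0 <= s <= t -> t <= T -> t - s < delta -> Rabs (f t - f s) < eps.
Proof.
  intros Hac Heps. destruct (Hac eps Heps) as (delta & Hdelta & Hvar).
  exists delta. split; [exact Hdelta|]. intros s t Hst HtT Hlen.
  specialize (Hvar 1%nat (fun _ => s) (fun _ => t)). simpl in Hvar.
  enough (0 + Rabs (f t - f s) < eps) by lra.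
  apply Hvar; [intros; lra | intros; lia | lra].
Qed.

Lemma abs_cont_on_opp T f : abs_cont_on T f -> abs_cont_on T (fun t => - f t).
Proof.
  intros Hac eps Heps. destruct (Hac eps Heps) as (delta & Hdelta & Hvar).
  exists delta. split; [exact Hdelta|]. intros n a b Hab Hchain Hlen.
  rewrite (sum_lt_ext n _ (fun k => Rabs (f (b k) - f (a k)))); [auto|].
  intros i _. rewrite <- Rabs_Ropp. f_equal. ring.
Qed.

Lemma abs_cont_on_const T k : abs_cont_on T (fun _ => k).
Proof.
  intros eps Heps. exists 1. split; [lra|]. intros n a b _ _ _.
  rewrite (sum_lt_ext n _ (fun _ => 0 * 0)), sum_lt_scal; [lra|].
  intros. rewrite Rminus_diag, Rabs_R0. ring.
Qed.

Lemma abs_cont_on_sub_linear T f M :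
  abs_cont_on T f -> abs_cont_on T (fun t => f t - M * t).
Proof.
  intros Hac eps Heps. destruct (Hac (eps / 2)) as (delta & Hdelta & Hvar); [lra|].
  pose proof (Rabs_pos M) as HM.
  set (q := eps / (2 * (Rabs M + 1))).
  assert (Hq : q * (2 * (Rabs M + 1)) = eps) by (unfold q; field; lra).
  assert (Hq0 : 0 < q) by (unfold q; apply Rdiv_lt_0_compat; lra).
  exists (Rmin delta q). split; [apply Rmin_pos; assumption|].
  intros n a b Hab Hchain Hlen.
  assert (Hlen_delta : sum_lt n (fun k => b k - a k) < delta)
    by (eapply Rlt_le_trans; [exact Hlen | apply Rmin_l]).
  assert (Hlen_q : sum_lt n (fun k => b k - a k) <= q)
    by (left; eapply Rlt_le_trans; [exact Hlen | apply Rmin_r]).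
  assert (Hlen0 : 0 <= sum_lt n (fun k => b k - a k))
    by (apply sum_lt_nonneg; intros i Hi; destruct (Hab i Hi); lra).
  specialize (Hvar n a b Hab Hchain Hlen_delta).
  apply Rle_lt_trans
    with (sum_lt n (fun k => Rabs (f (b k) - f (a k)) + Rabs M * (b k - a k))).
  - apply sum_lt_le. intros i Hi. destruct (Hab i Hi) as (_ & Hi_le & _).
    replace (f (b i) - M * b i - (f (a i) - M * a i))
      with ((f (b i) - f (a i)) + - M * (b i - a i)) by ring.
    eapply Rle_trans; [apply Rabs_triang|].
    rewrite Rabs_mult, Rabs_Ropp, (Rabs_pos_eq (b i - a i)) by lra. lra.
  - rewrite sum_lt_plus, sum_lt_scal.
    assert (Rabs M * sum_lt n (fun k => b k - a k) <= Rabs M * q)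
      by (apply Rmult_le_compat_l; assumption).
    nra.
Qed.

Lemma derivable_pt_lim_sub_linear f c l M :
  derivable_pt_lim f c l -> derivable_pt_lim (fun z => f z - M * z) c (l - M).
Proof.
  intros Hf. replace (l - M) with (l - M * 1) by ring.
  apply (derivable_pt_lim_minus f (fun z => M * z)); [exact Hf|].
  apply (derivable_pt_lim_scal id), derivable_pt_lim_id.
Qed.

Lemma derivable_pt_lim_locally_zero f a b c :
  (forall z, a < z < b -> f z = 0) -> a < c < b -> derivable_pt_lim f c 0.
Proof.
  intros Hzero Hc. apply (derivable_pt_lim_locally_ext (fun _ => 0) f c a b); [exact Hc| |].
  - intros z Hz. symmetry. apply Hzero, Hz.
  - apply derivable_pt_lim_const.
Qed.

(** * Monotonicity from an almost everywhere derivative bound *)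

Lemma derivable_pt_lim_nonpos_slope f s l eps :
  derivable_pt_lim f s l -> l <= 0 -> 0 < eps ->
  exists del, 0 < del /\ forall c d, s - del < c <= s -> s <= d < s + del ->
    f d - f c <= eps * (d - c).
Proof.
  intros Hf Hl Heps. destruct (Hf eps Heps) as [del Hdel].
  exists del. split; [apply cond_pos|].
  assert (Hquot : forall z, z <> s -> Rabs (z - s) < del ->
            (f z - f s) / (z - s) < eps).
  { intros z Hz Hzs. specialize (Hdel (z - s) ltac:(lra) Hzs).
    replace (s + (z - s)) with z in Hdel by ring.
    apply Rabs_def2 in Hdel as [Hq _]. lra. }
  intros c d Hc Hd.
  assert (Hleft : f s - f c <= eps * (s - c)).
  { destruct (Req_dec c s) as [->|Hcs]; [lra|].
    specialize (Hquot c Hcs ltac:(apply Rabs_def1; lra)).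
    replace (f s - f c) with ((f c - f s) / (c - s) * (s - c)) by (field; lra). nra. }
  assert (Hright : f d - f s <= eps * (d - s)).
  { destruct (Req_dec d s) as [->|Hds]; [lra|].
    specialize (Hquot d Hds ltac:(apply Rabs_def1; lra)).
    replace (f d - f s) with ((f d - f s) / (d - s) * (d - s)) by (field; lra). nra. }
  lra.
Qed.

Lemma lub_exists_above (E : R -> Prop) m y : is_lub E m -> y < m -> exists c, E c /\ y < c.
Proof.
  intros [_ Hleast] Hy. apply NNPP. intros Hnone.
  assert (Hub : is_upper_bound E y).
  { intros c Hc. apply Rnot_lt_le. intros Hyc. apply Hnone. exists c. auto. }
  specialize (Hleast y Hub). lra.
Qed.
Section Creeping.

Variables (f : R -> R) (a b : nat -> R) (s t eps : R).
Hypotheses (eps_pos : 0 < eps) (cover_ordered : forall k, a k <= b k) (s_le_t : s <= t).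

Definition cover_length (used : nat -> bool) (k : nat) : R :=
  if used k then b k - a k else 0.

(* [creep c]: the excess of [f c - f s] over [eps (c - s)] is at most the variation of
   [f] along finitely many ordered subintervals of [[s, c]], whose total length is
   bounded by the lengths of the cover intervals flagged in [used]; a flagged interval
   ends before [c] (unless [c = t]), so the one containing [c] is still available. *)
Definition creep (c : R) : Prop :=
  s <= c <= t /\
  exists (n : nat) (al be : nat -> R) (used : nat -> bool) (K : nat),
    (forall i, (i < n)%nat -> s <= al i /\ al i <= be i /\ be i <= c) /\
    (forall i, (S i < n)%nat -> be i <= al (S i)) /\
    sum_lt n (fun i => be i - al i) <= sum_lt K (cover_length used) /\
    (forall k, used k = true -> b k <= c \/ c = t) /\
    f c - f s <= eps * (c - s) + sum_lt n (fun i => Rabs (f (be i) - f (al i))).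

Lemma creep_start : creep s.
Proof.
  split; [lra|]. exists O, (fun _ => 0), (fun _ => 0), (fun _ => false), O.
  split; [intros; lia|]. split; [intros; lia|]. split; [simpl; lra|].
  split; [discriminate|]. simpl. lra.
Qed.

Lemma creep_step_regular c d : creep c -> c < t -> c <= d <= t ->
  f d - f c <= eps * (d - c) -> creep d.
Proof.
  intros (Hc & n & al & be & used & K & Hord & Hchain & Hlen & Hused & Hinc) Hct Hd Hslope.
  split; [lra|]. exists n, al, be, used, K.
  split; [intros i Hi; destruct (Hord i Hi); lra|].
  split; [exact Hchain|]. split; [exact Hlen|].
  split; [intros k Hk; destruct (Hused k Hk); [left|]; lra|].
  lra.
Qed.

Lemma creep_step_cover c d k : creep c -> c < t -> a k < c < b k -> c <= d <= t ->
  d <= b k -> (d = b k \/ d = t) -> creep d.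
Proof.
  intros (Hc & n & al & be & used & K & Hord & Hchain & Hlen & Hused & Hinc) Hct Hk Hd Hdb Hdk.
  assert (Hfresh : used k = false).
  { destruct (used k) eqn:E; [destruct (Hused k E); lra | reflexivity]. }
  split; [lra|].
  exists (S n), (fun i => if Nat.eqb i n then c else al i),
    (fun i => if Nat.eqb i n then d else be i),
    (fun j => orb (used j) (Nat.eqb j k)), (K + S k)%nat.
  split; [|split; [|split; [|split]]].
  - intros i Hi. destruct (Nat.eqb_spec i n) as [->|Hne]; [lra|].
    destruct (Hord i ltac:(lia)); lra.
  - intros i Hi. destruct (Nat.eqb_spec i n) as [->|Hne]; [lia|].
    destruct (Nat.eqb_spec (S i) n) as [E|Hne'].
    + destruct (Hord i ltac:(lia)); lra.
    + apply Hchain; lia.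
  - cbn [sum_lt]. rewrite Nat.eqb_refl.
    rewrite (sum_lt_ext n _ (fun i => be i - al i))
      by (intros i Hi; destruct (Nat.eqb_spec i n); [lia | reflexivity]).
    rewrite (sum_lt_ext (K + S k) _
      (fun j => cover_length used j + (if Nat.eqb j k then b k - a k else 0))).
    2:{ intros j _. unfold cover_length. destruct (Nat.eqb_spec j k) as [->|Hne].
        - rewrite Hfresh. simpl. ring.
        - rewrite Bool.orb_false_r. ring. }
    rewrite sum_lt_add_at by lia.
    assert (sum_lt K (cover_length used) <= sum_lt (K + S k) (cover_length used)).
    { apply sum_lt_le_length; [|lia]. intros i. unfold cover_length.
      destruct (used i); [specialize (cover_ordered i)|]; lra. }
    lra.
  - intros j Hj. apply Bool.orb_true_iff in Hj as [Hj|Hj].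
    + destruct (Hused j Hj); [left|]; lra.
    + apply Nat.eqb_eq in Hj as ->. destruct Hdk; [left|right]; lra.
  - cbn [sum_lt]. rewrite !Nat.eqb_refl.
    rewrite (sum_lt_ext n _ (fun i => Rabs (f (be i) - f (al i))))
      by (intros i Hi; destruct (Nat.eqb_spec i n); [lia | reflexivity]).
    assert (eps * (c - s) <= eps * (d - s)) by (apply Rmult_le_compat_l; lra).
    pose proof (Rle_abs (f d - f c)). lra.
Qed.

Hypothesis covered_or_regular : forall c, s <= c <= t ->
  (exists k, a k < c < b k) \/ (c < t /\ exists l, derivable_pt_lim f c l /\ l <= 0).

Lemma creep_end : creep t.
Proof.
  destruct (completeness creep) as [sig Hsig].
  { exists t. intros c [Hc _]. lra. }
  { exists s. apply creep_start. }
  assert (Hsig_lo : s <= sig) by (apply Hsig, creep_start).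
  assert (Hsig_hi : sig <= t) by (apply Hsig; intros c [Hc _]; lra).
  destruct (covered_or_regular sig (conj Hsig_lo Hsig_hi))
    as [[k Hk] | [Hsig_t (l & Hl & Hl0)]].
  - destruct (lub_exists_above creep sig (a k) Hsig (proj1 Hk)) as (c & Hc & Hkc).
    assert (c <= sig) by (apply Hsig, Hc).
    destruct (Rle_lt_or_eq_dec c t (proj2 (proj1 Hc))) as [Hct | <-]; [|exact Hc].
    destruct (Rle_dec (b k) t) as [Hbt|Hbt].
    + assert (creep (b k)) by (apply (creep_step_cover c (b k) k); auto; lra).
      assert (b k <= sig) by (apply Hsig; assumption). lra.
    + apply (creep_step_cover c t k); auto; lra.
  - exfalso.
    destruct (derivable_pt_lim_nonpos_slope f sig l eps Hl Hl0 eps_pos) as (del & Hdel & Hslope).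
    destruct (lub_exists_above creep sig (sig - del) Hsig ltac:(lra)) as (c & Hc & Hc_lo).
    assert (c <= sig) by (apply Hsig, Hc).
    set (d := Rmin (sig + del / 2) t).
    assert (Hd_hi : d <= sig + del / 2) by apply Rmin_l.
    assert (Hd_t : d <= t) by apply Rmin_r.
    assert (Hd_lo : sig < d) by (apply Rmin_glb_lt; lra).
    assert (creep d) by (apply (creep_step_regular c d); auto; try lra; apply Hslope; lra).
    assert (d <= sig) by (apply Hsig; assumption). lra.
Qed.

End Creeping.

(* Cover [N] and the endpoints by intervals so short that the variation of [f] over
   them stays below [eps]; elsewhere [f] creeps forward with slope at most [eps]. *)
Lemma ac_nonincreasing_of_ae_deriv_nonpos T f g N s t :
  abs_cont_on T f -> null_set N -> 0 <= s -> s <= t -> t <= T ->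
  (forall c, s < c < t -> ~ N c -> derivable_pt_lim f c (g c) /\ g c <= 0) ->
  f t - f s <= 0.
Proof.
  intros Hac HN Hs Hst HtT Hder.
  assert (Hsmall_eps : forall eps, 0 < eps -> f t - f s <= eps * (t - s + 1)).
  { intros eps Heps.
    destruct (Hac eps Heps) as (delta & Hdelta & Hvar).
    assert (HN' : null_set (fun c => N c \/ c = s \/ c = t))
      by (apply null_set_union; [|apply null_set_union]; auto using null_set_singleton).
    destruct (HN' (delta / 2)) as (a & b & Hab & Hcov & Hsum); [lra|].
    assert (Hend : creep f a b s t eps t).
    { apply creep_end; [exact Heps | exact Hab | exact Hst |].
      intros c Hc. destruct (classic (N c \/ c = s \/ c = t)) as [Hbad|Hgood].
      - left. exact (Hcov c Hbad).
      - right. assert (c <> s /\ c <> t /\ ~ N c) as (Hcs & Hct & HNc) by tauto.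
        split; [lra|]. exists (g c). apply Hder; [lra | exact HNc]. }
    destruct Hend as (_ & n & al & be & used & K & Hord & Hchain & Hlen & _ & Hinc).
    assert (Hsmall : sum_lt n (fun i => Rabs (f (be i) - f (al i))) < eps).
    { apply Hvar; [intros i Hi; destruct (Hord i Hi); lra | exact Hchain |].
      apply Rle_lt_trans with (sum_lt K (fun k => b k - a k)); [|specialize (Hsum K); lra].
      eapply Rle_trans; [exact Hlen|]. apply sum_lt_le. intros k _.
      unfold cover_length. specialize (Hab k). destruct (used k); lra. }
    lra. }
  apply Rle_plus_epsilon. intros eps Heps.
  specialize (Hsmall_eps (eps / (t - s + 1)) ltac:(apply Rdiv_lt_0_compat; lra)).
  replace (eps / (t - s + 1) * (t - s + 1)) with eps in Hsmall_eps by (field; lra). lra.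
Qed.

Lemma ac_increment_le_of_ae_deriv_le T f g M s t : abs_cont_on T f ->
  ae_on T (fun c => derivable_pt_lim f c (g c) /\ g c <= M) ->
  0 <= s -> s <= t -> t <= T -> f t - f s <= M * (t - s).
Proof.
  intros Hac (N & HN & Hder) Hs Hst HtT.
  enough ((f t - M * t) - (f s - M * s) <= 0) by lra.
  apply (ac_nonincreasing_of_ae_deriv_nonpos T (fun c => f c - M * c) (fun c => g c - M) N);
    auto using abs_cont_on_sub_linear.
  intros c Hc HNc. destruct (Hder c ltac:(lra) HNc) as [Hd Hg].
  split; [apply derivable_pt_lim_sub_linear, Hd | lra].
Qed.

Lemma ac_increment_abs_le T f g M s t : abs_cont_on T f ->
  ae_on T (fun c => derivable_pt_lim f c (g c) /\ Rabs (g c) <= M) ->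
  0 <= s -> s <= t -> t <= T -> Rabs (f t - f s) <= M * (t - s).
Proof.
  intros Hac Hder Hs Hst HtT. apply Rabs_le. split.
  - enough ((- f t) - (- f s) <= M * (t - s)) by lra.
    apply (ac_increment_le_of_ae_deriv_le T (fun c => - f c) (fun c => - g c));
      auto using abs_cont_on_opp.
    apply (ae_on_weaken _ _ _ Hder). intros c _ [Hd Hg].
    split; [apply (derivable_pt_lim_opp f), Hd|].
    pose proof (Rle_abs (- g c)). rewrite Rabs_Ropp in *. lra.
  - apply (ac_increment_le_of_ae_deriv_le T f g); auto.
    apply (ae_on_weaken _ _ _ Hder). intros c _ [Hd Hg].
    split; [exact Hd|]. pose proof (Rle_abs (g c)). lra.
Qed.

Lemma ac_const_of_ae_deriv_zero T f : abs_cont_on T f ->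
  ae_on T (fun c => derivable_pt_lim f c 0) -> forall t, 0 <= t <= T -> f t = f 0.
Proof.
  intros Hac Hder t Ht.
  assert (Hinc : Rabs (f t - f 0) <= 0 * (t - 0)).
  { apply (ac_increment_abs_le T f (fun _ => 0)); auto; try lra.
    apply (ae_on_weaken _ _ _ Hder). intros c _ Hd. rewrite Rabs_R0. auto with real. }
  pose proof (Rabs_pos (f t - f 0)).
  destruct (Req_dec (f t - f 0) 0) as [|Hne]; [lra|].
  apply Rabs_pos_lt in Hne. lra.
Qed.

Lemma null_set_misses_interval N a b :
  null_set N -> 0 <= a -> a < b -> exists c, a < c < b /\ ~ N c.
Proof.
  intros HN Ha Hab. apply NNPP. intros Hnone.
  (* Otherwise the derivative condition on [(a, b)] would be vacuous, and even the
     increasing function [c ↦ c] would be nonincreasing there. *)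
  enough ((0 - -1 * b) - (0 - -1 * a) <= 0) by lra.
  apply (ac_nonincreasing_of_ae_deriv_nonpos b (fun c => 0 - -1 * c) (fun _ => 0) N);
    auto using abs_cont_on_sub_linear, abs_cont_on_const; try lra.
  intros c Hc HNc. exfalso. apply Hnone. exists c. auto.
Qed.

Lemma ac_zero_of_ae_zero T f : 0 < T -> abs_cont_on T f ->
  ae_on T (fun c => f c = 0) -> forall t, 0 <= t <= T -> f t = 0.
Proof.
  intros HT Hac (N & HN & Hzero) t Ht. apply NNPP. intros Hft.
  destruct (abs_cont_on_increment T f (Rabs (f t)) Hac) as (d & Hd & Hinc);
    [apply Rabs_pos_lt, Hft|].
  destruct (null_set_misses_interval N (Rmax 0 (t - d / 2)) (Rmin T (t + d / 2)) HN)
    as (c & Hc & HNc);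
    [apply Rmax_l | apply Rmax_lub_lt; apply Rmin_glb_lt; lra |].
  pose proof (Rmax_l 0 (t - d / 2)). pose proof (Rmax_r 0 (t - d / 2)).
  pose proof (Rmin_l T (t + d / 2)). pose proof (Rmin_r T (t + d / 2)).
  assert (Hfc : f c = 0) by (apply Hzero; [lra | exact HNc]).
  destruct (Rle_dec c t).
  - specialize (Hinc c t ltac:(lra) ltac:(lra) ltac:(lra)).
    rewrite Hfc, Rminus_0_r in Hinc. lra.
  - specialize (Hinc t c ltac:(lra) ltac:(lra) ltac:(lra)).
    rewrite Hfc, Rminus_0_l, Rabs_Ropp in Hinc. lra.
Qed.

(** * Extremals with a singular arc *)

Section SingularExtremal.

Variables (T : R) (x y u1 u2 p1 p2 : R -> R) (lam0 : R).
Hypothesis T_pos : 0 < T.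
Hypotheses (x_ac : abs_cont_on T x) (y_ac : abs_cont_on T y)
  (p1_ac : abs_cont_on T p1) (p2_ac : abs_cont_on T p2).
Hypothesis costate_nonzero : forall t, 0 <= t <= T -> ~ (p1 t = 0 /\ p2 t = 0).
Hypothesis state_eq : ae_on T (fun t =>
  derivable_pt_lim x t (u1 t) /\ derivable_pt_lim y t (u2 t * x t)).
Hypothesis costate_eq : ae_on T (fun t =>
  derivable_pt_lim p1 t (- (u2 t * p2 t)) /\ derivable_pt_lim p2 t 0).
Hypothesis maximality : ae_on T (fun t =>
  u1 t * p1 t + u2 t * (x t * p2 t) = Rabs (p1 t) + Rabs (x t * p2 t) /\
  Rabs (p1 t) + Rabs (x t * p2 t) = lam0).

Lemma p2_const : forall t, 0 <= t <= T -> p2 t = p2 0.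
Proof.
  apply ac_const_of_ae_deriv_zero; [exact p2_ac|].
  apply (ae_on_weaken _ _ _ costate_eq). tauto.
Qed.

Lemma singular_arc_abnormal j a b : p2 0 <> 0 -> singular_arc T x p1 p2 j a b -> lam0 = 0.
Proof.
  intros Hp2 (Ha & Hab & HbT & Hsing).
  destruct (ae_on_and _ _ _ state_eq (ae_on_and _ _ _ costate_eq maximality))
    as (N & HN & Hall).
  destruct (null_set_misses_interval N a b HN Ha Hab) as (c & Hc & HNc).
  destruct (Hall c ltac:(lra) HNc) as ((Hx' & _) & (Hp1' & _) & Hmax & Hlam).
  rewrite (p2_const c) in Hp1', Hmax, Hlam by lra.
  pose proof (Rabs_pos (p1 c)). pose proof (Rabs_pos (x c * p2 0)).
  destruct j; simpl in Hsing.
  - assert (Hu2 : u2 c * p2 0 = 0).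
    { pose proof (derivable_pt_lim_locally_zero p1 a b c Hsing Hc) as Hp1'0.
      pose proof (uniqueness_limite _ _ _ _ Hp1' Hp1'0). lra. }
    apply Rmult_integral in Hu2 as [Hu2|]; [|contradiction].
    rewrite (Hsing c Hc), Rabs_R0 in Hmax, Hlam. rewrite Hu2 in Hmax. lra.
  - assert (Hx0 : forall z, a < z < b -> x z = 0).
    { intros z Hz. specialize (Hsing z Hz). rewrite (p2_const z) in Hsing by lra.
      apply Rmult_integral in Hsing as [|]; [assumption | contradiction]. }
    assert (Hu1 : u1 c = 0)
      by exact (uniqueness_limite _ _ _ _ Hx' (derivable_pt_lim_locally_zero x a b c Hx0 Hc)).
    rewrite (Hx0 c Hc), Rmult_0_l, Rabs_R0 in Hmax, Hlam. rewrite Hu1 in Hmax. lra.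
Qed.

Lemma abnormal_trajectory_constant : p2 0 <> 0 -> lam0 = 0 ->
  forall t, 0 <= t <= T -> x t = x 0 /\ y t = y 0.
Proof.
  intros Hp2 Hlam.
  assert (Hx : forall t, 0 <= t <= T -> x t = 0).
  { apply ac_zero_of_ae_zero; [exact T_pos | exact x_ac|].
    apply (ae_on_weaken _ _ _ maximality). intros c Hc [_ Hm].
    rewrite (p2_const c) in Hm by lra.
    destruct (Req_dec (x c) 0) as [|Hxc]; [assumption|].
    pose proof (Rabs_pos_lt _ (Rmult_integral_contrapositive_currified _ _ Hxc Hp2)).
    pose proof (Rabs_pos (p1 c)). lra. }
  assert (Hy : forall t, 0 <= t <= T -> y t = y 0).
  { apply ac_const_of_ae_deriv_zero; [exact y_ac|].
    apply (ae_on_weaken _ _ _ state_eq). intros c Hc [_ Hy'].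
    rewrite (Hx c), Rmult_0_r in Hy' by lra. exact Hy'. }
  intros t Ht. split; [rewrite (Hx t Ht), (Hx 0) by lra; reflexivity | apply Hy, Ht].
Qed.

Lemma singular_arc_p2_zero j a b : nonconstant T x y -> singular_arc T x p1 p2 j a b ->
  forall t, 0 <= t <= T -> p2 t = 0.
Proof.
  intros (t0 & Ht0 & Hmoves) Harc t Ht. rewrite (p2_const t Ht).
  apply NNPP. intros Hp2.
  destruct (abnormal_trajectory_constant Hp2 (singular_arc_abnormal j a b Hp2 Harc) t0 Ht0).
  tauto.
Qed.

Lemma u1_sign_of_p2_zero : (forall t, 0 <= t <= T -> p2 t = 0) ->
  ae_on T (fun t => u1 t = 1) \/ ae_on T (fun t => u1 t = -1).
Proof.
  intros Hp2.
  assert (Hp1 : forall t, 0 <= t <= T -> p1 t = p1 0).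
  { apply ac_const_of_ae_deriv_zero; [exact p1_ac|].
    apply (ae_on_weaken _ _ _ costate_eq). intros c Hc [Hd _].
    rewrite (Hp2 c), Rmult_0_r, Ropp_0 in Hd by lra. exact Hd. }
  assert (Hp10 : p1 0 <> 0).
  { intros E. apply (costate_nonzero 0); [lra|]. split; [exact E | apply Hp2; lra]. }
  assert (Hmax : ae_on T (fun t => u1 t * p1 0 = Rabs (p1 0))).
  { apply (ae_on_weaken _ _ _ maximality). intros c Hc [Hm _].
    rewrite (Hp2 c), (Hp1 c), !Rmult_0_r, Rabs_R0 in Hm by lra. lra. }
  destruct (Rlt_or_le 0 (p1 0)) as [Hpos|Hneg]; [left|right];
    apply (ae_on_weaken _ _ _ Hmax); intros c _ Hc;
    apply Rmult_eq_reg_r with (p1 0); try exact Hp10.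
  - rewrite Rabs_pos_eq in Hc by lra. lra.
  - rewrite Rabs_left in Hc by lra. lra.
Qed.

End SingularExtremal.

Lemma Rabs_sign sg : sg = 1 \/ sg = -1 -> Rabs sg = 1.
Proof. intros [-> | ->]; [rewrite Rabs_pos_eq | rewrite Rabs_left]; lra. Qed.

Lemma nonconstant_time_pos T x y : nonconstant T x y -> 0 < T.
Proof.
  intros (t & Ht & Hmoves). destruct (Req_dec t 0) as [->|Ht0]; [tauto | lra].
Qed.

Lemma singular_extremal_p2_zero T x y u1 u2 p1 p2 j a b : nonconstant T x y ->
  extremal_pair T x y u1 u2 p1 p2 -> singular_arc T x p1 p2 j a b ->
  forall t, 0 <= t <= T -> p2 t = 0.
Proof.
  intros Hnc ((_ & Hx & Hy & _ & _ & _ & Hstate) & _ & Hp2 & _ & Hcostate & lam0 & _ & Hmax).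
  apply (singular_arc_p2_zero T x y u1 u2 p1 p2 lam0); auto.
  apply (nonconstant_time_pos T x y Hnc).
Qed.

Lemma singular_extremal_fills_domain T x y u1 u2 p1 p2 j a b : nonconstant T x y ->
  extremal_pair T x y u1 u2 p1 p2 -> singular_arc T x p1 p2 j a b ->
  forall t, 0 <= t <= T -> phi j x p1 p2 t = 0.
Proof.
  intros Hnc Hext Harc.
  pose proof (singular_extremal_p2_zero T x y u1 u2 p1 p2 j a b Hnc Hext Harc) as Hp2.
  destruct j; simpl.
  - (* a [phi1]-singular arc would make the covector vanish *)
    exfalso. destruct Harc as (Ha & Hab & HbT & Hsing). destruct Hext as (_ & _ & _ & Hnz & _).
    apply (Hnz ((a + b) / 2)); [lra|]. split; [apply Hsing | apply Hp2]; lra.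
  - intros t Ht. rewrite (Hp2 t Ht). ring.
Qed.

Lemma u1_const_of_singular_extremal T x y : nonconstant T x y -> has_singular_arc T x y ->
  exists u1 u2, admissible T x y u1 u2 /\
    (ae_on T (fun t => u1 t = 1) \/ ae_on T (fun t => u1 t = -1)).
Proof.
  intros Hnc (u1 & u2 & p1 & p2 & Hext & j & a & b & Harc).
  pose proof (singular_extremal_p2_zero T x y u1 u2 p1 p2 j a b Hnc Hext Harc) as Hp2.
  destruct Hext as (Had & Hp1 & _ & Hnz & Hcostate & lam0 & _ & Hmax).
  exists u1, u2. split; [exact Had|].
  apply (u1_sign_of_p2_zero T x u1 u2 p1 p2 lam0); auto.
  apply (nonconstant_time_pos T x y Hnc).
Qed.

Lemma singular_extremal_of_u1_const T x y u1 u2 sg : 0 < T -> sg = 1 \/ sg = -1 ->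
  admissible T x y u1 u2 -> ae_on T (fun t => u1 t = sg) -> has_singular_arc T x y.
Proof.
  intros HT Hsg Had Hu.
  assert (Hsg_sq : sg * sg = 1) by (destruct Hsg as [-> | ->]; lra).
  exists u1, u2, (fun _ => sg), (fun _ => 0). split.
  - split; [exact Had|]. split; [apply abs_cont_on_const|]. split; [apply abs_cont_on_const|].
    split; [intros t _ [Hs _]; lra|]. split.
    + apply (ae_on_weaken _ _ _ Hu). intros t _ _.
      rewrite Rmult_0_r, Ropp_0. split; apply derivable_pt_lim_const.
    + exists 1. split; [lra|]. apply (ae_on_weaken _ _ _ Hu). intros t _ Ht.
      rewrite Ht, !Rmult_0_r, Rabs_R0, Rabs_sign by exact Hsg. lra.
  - exists J2, 0, T. repeat split; try lra. intros t _. simpl. ring.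
Qed.

Lemma admissible_x_increment_le T x y u1 u2 :
  admissible T x y u1 u2 -> Rabs (x T - x 0) <= T.
Proof.
  intros (HT & Hx & _ & _ & _ & Hbound & Hstate).
  replace T with (1 * (T - 0)) at 2 by ring.
  apply (ac_increment_abs_le T x u1); [exact Hx | | lra | lra | lra].
  apply (ae_on_weaken _ _ _ (ae_on_and _ _ _ Hstate Hbound)).
  intros c _ ((Hd & _) & Hb & _). auto.
Qed.

Lemma x_increment_of_u1_const T x y u1 u2 sg : admissible T x y u1 u2 ->
  ae_on T (fun t => u1 t = sg) -> x T - x 0 = sg * T.
Proof.
  intros (HT & Hx & _ & _ & _ & _ & Hstate) Hu.
  enough (x T - sg * T = x 0 - sg * 0) by lra.
  apply (ac_const_of_ae_deriv_zero T (fun c => x c - sg * c));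
    [apply abs_cont_on_sub_linear, Hx | | lra].
  apply (ae_on_weaken _ _ _ (ae_on_and _ _ _ Hstate Hu)). intros c _ ((Hd & _) & Hc).
  replace 0 with (u1 c - sg) by lra. apply derivable_pt_lim_sub_linear, Hd.
Qed.

Lemma time_minimizer_of_u1_const T x y u1 u2 sg : sg = 1 \/ sg = -1 ->
  admissible T x y u1 u2 -> ae_on T (fun t => u1 t = sg) -> time_minimizer T x y.
Proof.
  intros Hsg Had Hu T' x' y' v1 v2 Had' Hx0 _ HxT _.
  pose proof (x_increment_of_u1_const T x y u1 u2 sg Had Hu) as Hinc.
  pose proof (admissible_x_increment_le T' x' y' v1 v2 Had') as Hbound.
  destruct Had as [HT _].
  rewrite Hx0, HxT, Hinc, Rabs_mult, Rabs_sign, (Rabs_pos_eq T) in Hbound by assumption.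
  lra.
Qed.

Theorem mainTheorem9 :
  forall (T : R) (x y : R -> R),
    nonconstant T x y ->
    (has_singular_arc T x y <->
       exists u1 u2, admissible T x y u1 u2 /\
         (ae_on T (fun t => u1 t = 1) \/ ae_on T (fun t => u1 t = -1))) /\
    (has_singular_arc T x y ->
       (forall u1 u2 p1 p2 j a b,
          extremal_pair T x y u1 u2 p1 p2 ->
          singular_arc T x p1 p2 j a b ->
          forall t, 0 < t < T -> phi j x p1 p2 t = 0) /\
       time_minimizer T x y).
Proof.
  intros T x y Hnc.
  pose proof (nonconstant_time_pos T x y Hnc) as HT.
  split; [split|].
  - apply u1_const_of_singular_extremal, Hnc.
  - intros (u1 & u2 & Had & [Hu|Hu]);
      [apply (singular_extremal_of_u1_const T x y u1 u2 1)
      | apply (singular_extremal_of_u1_const T x y u1 u2 (-1))]; auto.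
  - intros Harc. split.
    + intros u1 u2 p1 p2 j a b Hext Hsing t Ht.
      apply (singular_extremal_fills_domain T x y u1 u2 p1 p2 j a b); auto. lra.
    + destruct (u1_const_of_singular_extremal T x y Hnc Harc) as (u1 & u2 & Had & [Hu|Hu]);
        [apply (time_minimizer_of_u1_const T x y u1 u2 1)
        | apply (time_minimizer_of_u1_const T x y u1 u2 (-1))]; auto.
Qed.
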